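(* There is a universal constant $C>0$ such that for any real numbers $\{c_{ij}: 1\le i,j\le 4\}$, $$\min_{S}\sum_{1\le i,j\le 4}c_{ij}S_{u_i}S_{v_j}\le -C\sum_{1\le i,j\le 4}|c_{ij}|,$$ where the minimum is over all assignments $S=(S_{u_1},\dots,S_{u_4},S_{v_1},\dots,S_{v_4})\in\{-1,1\}^8$. In particular, this holds for some $C>\frac{\ln(1+\sqrt{2})}{\pi}$.
   Context: Here $u_1,\dots,u_4$ and $v_1,\dots,v_4$ are the two sides of the complete bipartite graph $K_{4,4}$, with edge set $\{u_1,\dots,u_4\}\times\{v_1,\dots,v_4\}$ and coefficient $c_{ij}$ on edge $(u_i,v_j)$. *)

From HB Require Import structures.
From mathcomp Require Import all_boot all_order all_algebra.
From mathcomp Require Import all_classical all_reals all_analysis.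
Set Implicit Arguments. Unset Strict Implicit. Unset Printing Implicit Defensive.
Import Order.TTheory GRing.Theory Num.Theory.
Local Open Scope ring_scope.

Definition spin (R : ringType) (b : bool) : R := if b then 1 else -1.

(* An assignment S = (S_{u_1..u_4}, S_{v_1..v_4}) in {-1,1}^8, encoded by booleans. *)
Definition assignment := ({ffun 'I_4 -> bool} * {ffun 'I_4 -> bool})%type.

Definition energy (R : realType) (c : 'I_4 -> 'I_4 -> R) (S : assignment) : R :=
  \sum_(i < 4) \sum_(j < 4) c i j * spin R (S.1 i) * spin R (S.2 j).

Definition all_plus : assignment := ([ffun _ => true], [ffun _ => true]).

Definition min_energy (R : realType) (c : 'I_4 -> 'I_4 -> R) : R :=
  \big[Num.min/energy c all_plus]_(S : assignment) energy c S.

From HB Require Import structures.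
From mathcomp Require Import all_boot all_order all_algebra.
From mathcomp Require Import all_classical all_reals all_analysis.
From mathcomp Require Import ring lra.
Import Order.TTheory GRing.Theory Num.Theory.
Import numFieldNormedType.Exports.
Local Open Scope ring_scope.

(* Fix the spins S_u to one of the eight patterns with S_{u_1} = 1 and let each
   S_{v_j} be the sign opposite to its local field sum_i c_ij S_{u_i}; the energy is
   then - sum_j |sum_i c_ij S_{u_i}|.  Averaged over the eight patterns, column j
   contributes at least (3/8) sum_i |c_ij| (an elementary inequality in four reals,
   sharp when all |c_ij| agree), so C = 3/8 works.  Finally
   ln (1 + sqrt 2) < 1 and pi > 2 sqrt 2 give ln (1 + sqrt 2) / pi < 3/8. *)

Lemma sum_abs_sign_combinations (R : realDomainType) (a b c d : R) :
  3 * (`|a| + `|b| + `|c| + `|d|) <=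
    `|a + b + c + d| + `|a + b + c - d| + `|a + b - c + d| + `|a + b - c - d| +
    `|a - b + c + d| + `|a - b + c - d| + `|a - b - c + d| + `|a - b - c - d|.
Proof.
have norm_bounds (x : R) : x <= `|x| /\ - x <= `|x|.
  by split; [exact: ler_norm | rewrite -normrN ler_norm].
have norm_cases (x : R) : 0 <= x /\ `|x| = x \/ x < 0 /\ `|x| = - x.
  by case: (lerP 0 x) => hx; [left; rewrite ger0_norm | right; rewrite ltr0_norm].
move: (norm_bounds (a + b + c + d)) (norm_bounds (a + b + c - d))
      (norm_bounds (a + b - c + d)) (norm_bounds (a + b - c - d))
      (norm_bounds (a - b + c + d)) (norm_bounds (a - b + c - d))
      (norm_bounds (a - b - c + d)) (norm_bounds (a - b - c - d))
  => [? ?] [? ?] [? ?] [? ?] [? ?] [? ?] [? ?] [? ?].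
case: (norm_cases a) (norm_cases b) (norm_cases c) (norm_cases d)
  => [[? ->]|[? ->]] [[? ->]|[? ->]] [[? ->]|[? ->]] [[? ->]|[? ->]]; lra.
Qed.

Definition u_pattern (b1 b2 b3 : bool) : {ffun 'I_4 -> bool} :=
  [ffun i : 'I_4 => nth true [:: true; b1; b2; b3] i].

Lemma sum_abs_u_patterns (R : realDomainType) (f : 'I_4 -> R) :
  3 * \sum_i `|f i| <=
    \sum_(b1 : bool) \sum_(b2 : bool) \sum_(b3 : bool)
      `|\sum_i f i * spin R (u_pattern b1 b2 b3 i)|.
Proof.
rewrite !big_bool !big_ord_recr !big_ord0 /= !ffunE /spin /= !mulr1 !mulrN1 !add0r.
by rewrite !addrA; exact: sum_abs_sign_combinations.
Qed.

Lemma mulr_spin_ltr0 (R : realDomainType) (x : R) : x * spin R (x < 0) = - `|x|.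
Proof.
rewrite /spin; case: ltrP => hx.
  by rewrite mulr1 ltr0_norm ?opprK.
by rewrite mulrN1 ger0_norm.
Qed.

Lemma min_energy_le_energy (R : realType) (c : 'I_4 -> 'I_4 -> R) (S : assignment) :
  min_energy c <= energy c S.
Proof. by rewrite /min_energy (bigD1 S) //= ge_min lexx. Qed.

Lemma min_energy_le_column_norms (R : realType) (c : 'I_4 -> 'I_4 -> R)
    (x : {ffun 'I_4 -> bool}) :
  min_energy c <= - \sum_j `|\sum_i c i j * spin R (x i)|.
Proof.
pose y := [ffun j => \sum_i c i j * spin R (x i) < 0].
suff <- : energy c (x, y) = - \sum_j `|\sum_i c i j * spin R (x i)|.
  exact: min_energy_le_energy.
rewrite /energy exchange_big -sumrN; apply: eq_bigr => j _ /=.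
by rewrite ffunE -mulr_suml mulr_spin_ltr0.
Qed.

Lemma min_energy_le (R : realType) (c : 'I_4 -> 'I_4 -> R) :
  min_energy c <= - (3 / 8) * \sum_i \sum_j `|c i j|.
Proof.
pose g j b1 b2 b3 := `|\sum_i c i j * spin R (u_pattern b1 b2 b3 i)|.
have patterns : 8 * min_energy c <=
    \sum_(b1 : bool) \sum_(b2 : bool) \sum_(b3 : bool) - \sum_j g j b1 b2 b3.
  have -> : 8 * min_energy c =
      \sum_(b1 : bool) \sum_(b2 : bool) \sum_(b3 : bool) min_energy c.
    by rewrite !big_bool /=; ring.
  by do 3 (apply: ler_sum => ? _); exact: min_energy_le_column_norms.
have columns : 3 * \sum_j \sum_i `|c i j| <=
    \sum_(b1 : bool) \sum_(b2 : bool) \sum_(b3 : bool) \sum_j g j b1 b2 b3.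
  have -> : \sum_(b1 : bool) \sum_(b2 : bool) \sum_(b3 : bool) \sum_j g j b1 b2 b3 =
      \sum_j \sum_(b1 : bool) \sum_(b2 : bool) \sum_(b3 : bool) g j b1 b2 b3.
    rewrite [RHS]exchange_big; apply: eq_bigr => b1 _.
    rewrite [RHS]exchange_big; apply: eq_bigr => b2 _.
    exact: exchange_big.
  by rewrite mulr_sumr; apply: ler_sum => j _; exact: sum_abs_u_patterns.
rewrite !big_bool /= in patterns columns.
rewrite exchange_big /=; lra.
Qed.

Lemma sin_le_id (R : realType) (x : R) : 0 < x -> sin x <= x.
Proof.
move=> x_gt0.
have sin_derive z : z \in `]0, x[ -> is_derive z 1 (@sin R) (cos z).
  by move=> _; exact: is_derive_sin.
have sin_cont : {within `[0, x]%classic, continuous (@sin R)}%classic.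
  by apply/continuous_subspaceT => ?; exact: continuous_sin.
have [z _] := MVT x_gt0 sin_derive sin_cont.
rewrite sin0 !subr0 => ->.
by have := cos_le1 z; nra.
Qed.

Lemma sqr_pi_ge8 (R : realType) : 8 <= (pi : R) ^+ 2.
Proof.
have pi_gt0 := pi_gt0 R.
set s := sin (pi / 4 : R).
(* sin (pi/4) = cos (pi/4), hence 2 s^2 = 1, while s <= pi/4 *)
have s_cos : s = cos (pi / 4).
  rewrite /s {1}(_ : (pi / 4 : R) = pi / 2 - pi / 4); last by field.
  by rewrite sinB sin_pihalf cos_pihalf mul1r mul0r subr0.
have s_sqr : s ^+ 2 + s ^+ 2 = 1 by rewrite {1}s_cos /s cos2Dsin2.
have s_gt0 : 0 < s by apply: sin_gt0_pihalf; apply/andP; split; lra.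
have s_le : s <= pi / 4 by apply: sin_le_id; lra.
have : s * s <= (pi / 4) * (pi / 4) by apply: ler_pM; lra.
by rewrite -!expr2 in s_sqr *; nra.
Qed.

Lemma ln_1Dsqrt2_lt1 (R : realType) : ln (1 + Num.sqrt 2) < (1 : R).
Proof.
have sqrt2_ge0 : 0 <= Num.sqrt (2 : R) := sqrtr_ge0 _.
have sqrt2_sqr : Num.sqrt (2 : R) ^+ 2 = 2 by rewrite sqr_sqrtr // ler0n.
have e_ge : (5/4 : R) ^+ 4 <= expR 1.
  (* (5/4)^4 > 2.44 > 1 + sqrt 2 *)
  have -> : (1 : R) = 4%:R * (1/4) by field.
  rewrite expRM_natl; apply: lerXn2r; rewrite ?nnegrE; try lra.
  - by have := expR_gt0 (1/4 : R); lra.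
  - by have := expR_ge1Dx (1/4 : R); lra.
rewrite -ltr_expR lnK; last by rewrite posrE; lra.
by apply: lt_le_trans e_ge; nra.
Qed.

Lemma ln_1Dsqrt2_div_pi_lt (R : realType) : ln (1 + Num.sqrt 2) / pi < (3 / 8 : R).
Proof.
have pi_gt0 := pi_gt0 R; have := sqr_pi_ge8 R; have := ln_1Dsqrt2_lt1 R.
by rewrite ltr_pdivrMr // expr2; nra.
Qed.

Theorem lemma2 (R : realType) :
  exists C : R, 0 < C /\ ln (1 + Num.sqrt 2) / pi < C /\
    forall c : 'I_4 -> 'I_4 -> R,
      min_energy c <= - C * \sum_(i < 4) \sum_(j < 4) `|c i j|.
Proof.
exists (3 / 8); split; first lra.
by split; [exact: ln_1Dsqrt2_div_pi_lt | exact: min_energy_le].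
Qed.
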